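(* Let $n\geq 3$ and, for $1\leq i\leq\lfloor n/2\rfloor$, let $G_i$ be the graph obtained from $K_n$ by deleting $i$ pairwise disjoint edges (equivalently, by successively deleting $i$ edges each joining two saturated vertices). Let $g:A\to B$ be a constant function with value $w\in B$, and let $F_{G_i}$ be the corresponding functigraph of $G_i$. Then: (i) if $1\leq i\leq\lfloor n/2\rfloor-1$, then $fix(F_{G_i})=2n-2i-3$; (ii) if $n$ is even and $i=n/2$, then $fix(F_{G_i})=n-1$; (iii) if $n$ is odd and $i=\lfloor n/2\rfloor$, then $fix(F_{G_i})=2\lfloor n/2\rfloor$ when $w$ is the unique saturated vertex of $G_2$ (the copy of $G_i$ on $B$), and $fix(F_{G_i})=2\lfloor n/2\rfloor-1$ otherwise.
   Context: A vertex of a graph is saturated if it is adjacent to all other vertices. A set $S\subseteq V(H)$ is a fixing set of a graph $H$ if the only automorphism of $H$ fixing every vertex of $S$ is the identity; $fix(H)$ is the minimum cardinality of a fixing set of $H$. Functigraph: let $G_1,G_2$ be disjoint copies of a connected graph $G$, with $A=V(G_1)$, $B=V(G_2)$, and let $g:A\to B$ be a function. The functigraph $F_G$ has vertex set $A\cup B$ and edge set $E(G_1)\cup E(G_2)\cup\{ug(u):u\in A\}$. *)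

From mathcomp Require Import all_boot all_fingroup.
Set Implicit Arguments. Unset Strict Implicit. Unset Printing Implicit Defensive.

(* A simple graph on a finite vertex type V is a relation e : rel V
   (intended symmetric and irreflexive). *)

Definition saturated (V : finType) (e : rel V) (x : V) : bool :=
  [forall y, (y != x) ==> e x y].

Definition is_automorphism (V : finType) (e : rel V) (p : {perm V}) : bool :=
  [forall x, forall y, e (p x) (p y) == e x y].

Definition fixing_set (V : finType) (e : rel V) (S : {set V}) : bool :=
  [forall p : {perm V},
     (is_automorphism e p && [forall x in S, p x == x]) ==> (p == 1%g)].

(* fix(H): minimum cardinality of a fixing set (V itself is always a fixing
   set, so #|V| is a valid neutral element for the minimum). *)
Definition fixnum (V : finType) (e : rel V) : nat :=
  \big[minn/#|V|]_(S : {set V} | fixing_set e S) #|S|.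

(* Functigraph of G (on T) w.r.t. g : A -> B; A = inl copy, B = inr copy. *)
Definition functigraph (T : finType) (G : rel T) (g : T -> T) : rel (T + T) :=
  fun x y =>
    match x, y with
    | inl a, inl b => G a b
    | inr a, inr b => G a b
    | inl a, inr b => g a == b
    | inr b, inl a => g a == b
    end.

Definition Kn_minus (n : nat) (M : {set {set 'I_n}}) : rel 'I_n :=
  fun x y => (x != y) && ([set x; y] \notin M).

Definition is_matching (n : nat) (M : {set {set 'I_n}}) : bool :=
  [forall E in M, #|E| == 2] && trivIset M.

From mathcomp Require Import all_boot all_fingroup zify.
Set Implicit Arguments. Unset Strict Implicit. Unset Printing Implicit Defensive.

(* In G = K_n minus a matching, two distinct vertices are twins exactly when
   they are matched together or both unmatched, and an automorphism fixing a
   set P is the identity iff P meets every such twin pair.  Hence fix(G) is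
   the number of matched pairs plus all unmatched vertices but one.  In the
   functigraph with constant g = w, the copy of w in B is the only vertex of
   degree > n, so every automorphism fixes it, hence also the copy of mate(w),
   and (once one vertex of A is fixed, using that G has diameter 2) preserves
   both copies.  Fixing the functigraph thus amounts to fixing the A-copy of G
   and the B-copy of G relative to {w, mate(w)}; adding the two counts gives
   all three cases. *)

Section Automorphisms.
Variables (V : finType) (e : rel V).

Lemma is_automorphismP (p : {perm V}) :
  reflect (forall x y, e (p x) (p y) = e x y) (is_automorphism e p).
Proof.
apply: (iffP forallP) => [h x y | h x]; last by apply/forallP => y; rewrite h.
by have /forallP/(_ y)/eqP := h x.
Qed.

Lemma saturated_aut (p : {perm V}) x :
  is_automorphism e p -> saturated e (p x) = saturated e x.
Proof.
move=> /is_automorphismP hp; apply/forallP/forallP => /= h y.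
  by have := h (p y); rewrite (inj_eq perm_inj) hp.
by rewrite -(permKV p y) (inj_eq perm_inj) hp.
Qed.

Lemma card_nbr_aut (p : {perm V}) x :
  is_automorphism e p -> #|[set y | e (p x) y]| = #|[set y | e x y]|.
Proof.
move=> /is_automorphismP hp; rewrite -[RHS](card_imset _ (@perm_inj _ p)).
apply: eq_card => y; rewrite inE -[in LHS](permKV p y) hp.
by rewrite -[in RHS](permKV p y) (mem_imset _ _ perm_inj) inE.
Qed.

Lemma fixnum_eq (S0 : {set V}) :
  fixing_set e S0 -> (forall S, fixing_set e S -> #|S0| <= #|S|) ->
  fixnum e = #|S0|.
Proof.
move=> fixS0 minS0; apply/eqP; rewrite eqn_leq.
apply/andP; split; last first.
  by apply: (big_ind (leq #|S0|)) => //[|a b ha hb]; [apply: max_card | rewrite leq_min ha].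
have : S0 \in index_enum {set V} by rewrite mem_index_enum.
rewrite /fixnum; elim: (index_enum _) => // T s IH; rewrite inE big_cons.
case/predU1P => [<-|/IH]; first by rewrite fixS0 geq_minl.
by case: ifP => // _; apply: leq_trans (geq_minr _ _).
Qed.

Definition twins x y := forall z, z != x -> z != y -> e x z = e y z.

Hypotheses (e_sym : symmetric e) (e_irr : irreflexive e).

Lemma tperm_automorphism x y : twins x y -> is_automorphism e (tperm x y).
Proof.
move=> txy; apply/is_automorphismP => a b.
have txy' z : z != x -> z != y -> e z x = e z y.
  by move=> zx zy; rewrite e_sym txy // e_sym.
case: tpermP => [->|->|/eqP ax /eqP ay]; case: tpermP => [->|->|/eqP bx /eqP by_];
  by rewrite ?e_irr // ?(e_sym x y) ?txy ?txy' // -?txy ?(txy' _ ax ay).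
Qed.

Lemma fixing_set_twins (S : {set V}) x y :
  fixing_set e S -> twins x y -> x != y -> (x \in S) || (y \in S).
Proof.
move=> /forallP/(_ (tperm x y)) fixS txy xy; apply/norP => -[xS yS].
move: fixS; rewrite tperm_automorphism //=.
have -> : [forall z in S, tperm x y z == z].
  apply/forall_inP => z zS.
  by rewrite tpermD //; [apply: contraNneq xS => -> | apply: contraNneq yS => ->].
move=> /eqP /permP/(_ x); rewrite tpermL perm1 => /eqP.
by rewrite eq_sym (negbTE xy).
Qed.

End Automorphisms.

Section MatchingComplement.
Variables (n : nat) (M : {set {set 'I_n}}).
Local Notation G := (Kn_minus M).

Lemma Kn_minus_sym : symmetric G.
Proof. by move=> x y; rewrite /Kn_minus eq_sym setUC. Qed.

Lemma Kn_minus_irr : irreflexive G.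
Proof. by move=> x; rewrite /Kn_minus eqxx. Qed.

(* The partner of [x] in the matching, or [x] itself when [x] is unmatched. *)
Definition mate (x : 'I_n) : 'I_n := odflt x [pick y | (y != x) && ~~ G x y].

Lemma Kn_minus_mate x : ~~ G x (mate x).
Proof. by rewrite /mate; case: pickP => [y /andP[]|] //=; rewrite Kn_minus_irr. Qed.

Hypothesis M_triv : trivIset M.

Lemma nonadj_uniq x y z :
  y != x -> ~~ G x y -> z != x -> ~~ G x z -> y = z.
Proof.
rewrite /Kn_minus => yx; rewrite eq_sym yx negbK => xyM zx.
rewrite eq_sym zx negbK => xzM.
have [exyz|] := eqVneq [set x; y] [set x; z].
  have : y \in [set x; z] by rewrite -exyz set22.
  by rewrite !inE (negbTE yx) => /eqP.
move/trivIsetP: M_triv => /(_ _ _ xyM xzM) dis /dis /disjointFr /(_ (set21 x y)).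
by rewrite set21.
Qed.

Lemma mateP x y : y != x -> ~~ G x y -> mate x = y.
Proof.
move=> yx xy; rewrite /mate; case: pickP => [z /andP[zx xz] | /(_ y)] /=.
  exact: nonadj_uniq zx xz yx xy.
by rewrite yx xy.
Qed.

Lemma Kn_minusE x y : G x y = (y != x) && (y != mate x).
Proof.
have [->|yx] := eqVneq y x; first by rewrite Kn_minus_irr.
apply/idP/idP => [xy | ym]; first by apply: contraTneq xy => ->; apply: Kn_minus_mate.
by apply: contraR ym => /(mateP yx) ->.
Qed.

Lemma mateK : involutive mate.
Proof.
move=> x; have [mx|mx] := eqVneq (mate x) x; first by rewrite !mx.
by apply: mateP; [rewrite eq_sym | rewrite Kn_minus_sym Kn_minus_mate].
Qed.

Lemma mate_inj : injective mate.
Proof. exact: inv_inj mateK. Qed.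

Lemma saturated_Kn_minus x : saturated G x = (mate x == x).
Proof.
apply/forallP/eqP => [sat | mx y]; last by rewrite Kn_minusE mx andbb implybb.
apply/eqP/negP => /negP mx; move/implyP: (sat (mate x)) => /(_ mx).
by apply/negP; apply: Kn_minus_mate.
Qed.

Lemma aut_mate (p : {perm 'I_n}) x :
  is_automorphism G p -> p (mate x) = mate (p x).
Proof.
move=> autp; have [mx|mx] := eqVneq (mate x) x.
  by apply/esym/eqP; rewrite mx -saturated_Kn_minus saturated_aut // saturated_Kn_minus mx.
apply/esym/mateP; first by rewrite (inj_eq perm_inj).
by move/is_automorphismP: autp => ->; apply: Kn_minus_mate.
Qed.

Definition twin_pair x y : bool :=
  (x != y) && ((y == mate x) || (mate x == x) && (mate y == y)).

Lemma twins_Kn_minus x y : twin_pair x y -> twins G x y.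
Proof.
case/andP=> _ pair z zx zy; rewrite !Kn_minusE zx zy /=.
case/orP: pair => [/eqP yE|/andP[/eqP-> /eqP->]]; last by rewrite zx zy.
by rewrite yE mateK -yE zx zy.
Qed.

Definition hits_twins (X P : {set 'I_n}) : Prop :=
  forall x y, x \notin X -> y \notin X -> twin_pair x y -> (x \in P) || (y \in P).

Lemma hits_twinsU X P : hits_twins X P -> hits_twins set0 (P :|: X).
Proof.
move=> hit x y _ _ xy; rewrite !inE.
case: (boolP (x \in X)) => [|xX]; first by rewrite orbT.
case: (boolP (y \in X)) => [|yX]; first by rewrite !orbT.
by case/orP: (hit x y xX yX xy) => ->; rewrite ?orbT.
Qed.

Lemma aut_Kn_minus_id (p : {perm 'I_n}) (P : {set 'I_n}) :
  is_automorphism G p -> {in P, forall x, p x = x} -> hits_twins set0 P -> p = 1%g.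
Proof.
move=> autp fixP hit; apply/permP => x; rewrite perm1.
have {}hit y z : twin_pair y z -> (y \in P) || (z \in P) by apply: hit; rewrite inE.
case: (boolP (x \in P)) => [/fixP // | xP].
have [mx|mx] := eqVneq (mate x) x.
  have [//|pxx] := eqVneq (p x) x.
  have mpx : mate (p x) = p x by rewrite -aut_mate // mx.
  have : twin_pair x (p x) by rewrite /twin_pair eq_sym pxx mx mpx !eqxx orbT.
  case/hit/orP => [|/fixP pxP]; first by rewrite (negbTE xP).
  exact: perm_inj pxP.
have : twin_pair x (mate x) by rewrite /twin_pair eq_sym mx eqxx.
case/hit/orP => [|/fixP pmx]; first by rewrite (negbTE xP).
by rewrite -{1}(mateK x) aut_mate // pmx mateK.
Qed.

Definition matched : {set 'I_n} := [set x | mate x != x].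

Lemma card_matched : is_matching M -> #|matched| = 2 * #|M|.
Proof.
case/andP=> /forall_inP M2 _.
have -> : matched = cover M.
  apply/setP => x; rewrite inE; apply/idP/bigcupP => [mx | [E ME xE]].
    exists [set x; mate x]; last by rewrite set21.
    by move: (Kn_minus_mate x); rewrite /Kn_minus eq_sym mx negbK.
  have /cards2P[a [b [ab Eab]]] := M2 E ME.
  have mab : mate a = b.
    by apply: mateP; [rewrite eq_sym | rewrite /Kn_minus ab -Eab ME].
  move: xE; rewrite Eab !inE => /orP[]/eqP->; first by rewrite mab eq_sym.
  by rewrite -mab mateK mab.
move/eqP: M_triv => <-; rewrite (eq_bigr (fun _ => 2)); last by move=> E /M2/eqP.
by rewrite sum_nat_const mulnC.
Qed.

(* Twice the least number of extra vertices needed to break all twin pairs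
   outside the mate-closed set [X]: one vertex per matched pair, and all
   unmatched vertices but one. *)
Definition twin_bound (X : {set 'I_n}) : nat :=
  #|matched :\: X| + 2 * (#|~: matched :\: X| - 1).

Lemma twin_bound_set0_gt0 : 1 < n -> 0 < twin_bound set0.
Proof. by rewrite /twin_bound !setD0; have := cardsC matched; rewrite card_ord; lia. Qed.

Lemma twin_bound_mate_pair x :
  twin_bound [set x; mate x] =
  if mate x == x then #|matched| + 2 * (#|~: matched| - 2)
  else #|matched| - 2 + 2 * (#|~: matched| - 1).
Proof.
rewrite /twin_bound !cardsD; have [mx|mx] := eqVneq (mate x) x.
  rewrite mx setUid.
  have -> : matched :&: [set x] = set0.
    by apply/setP => y; rewrite !inE; case: (eqVneq y x) => [->|]; rewrite ?mx ?eqxx ?andbF.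
  have -> : ~: matched :&: [set x] = [set x].
    by apply/setIidPr; rewrite sub1set !inE mx eqxx.
  by rewrite cards0 cards1 subn0 -subnDA.
have Xm : [set x; mate x] \subset matched.
  by rewrite subUset !sub1set !inE mateK mx eq_sym mx.
have -> : ~: matched :&: [set x; mate x] = set0.
  by apply/eqP; rewrite setI_eq0 disjoint_sym disjoints_subset setCK.
by rewrite (setIidPr Xm) cards2 eq_sym mx cards0 subn0.
Qed.

Section TwinBound.
Variable X : {set 'I_n}.
Hypothesis X_mate : {in X, forall x, mate x \in X}.

Let mX := matched :\: X.
Let uX := ~: matched :\: X.

Lemma mate_matchedD x : x \in mX -> mate x \in mX.
Proof.
rewrite !inE mateK eq_sym => /andP[xX ->]; rewrite andbT.
by apply: contra xX => /X_mate; rewrite mateK.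
Qed.

Lemma twin_bound_le P : hits_twins X P -> twin_bound X <= 2 * #|P|.
Proof.
move=> hit.
have mXP : #|mX :\: P| <= #|mX :&: P|.
  rewrite -(card_imset _ mate_inj); apply/subset_leq_card/subsetP => _ /imsetP[x + ->].
  rewrite !inE => /andP[xP /andP[xX mx]].
  have mxX : mate x \notin X by apply: contra xX => /X_mate; rewrite mateK.
  have : twin_pair x (mate x) by rewrite /twin_pair eq_sym mx eqxx.
  case/(hit _ _ xX mxX)/orP => [|->]; first by rewrite (negbTE xP).
  by rewrite mxX mateK eq_sym mx.
have uXP : #|uX :\: P| <= 1.
  apply/card_le1_eqP => x y; rewrite !inE.
  move=> /andP[xP /andP[xX /negPn mx]] /andP[yP /andP[yX /negPn my]].
  apply/eqP/negPn/negP => xy.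
  have : twin_pair x y by rewrite /twin_pair eq_sym xy mx my orbT.
  by case/(hit _ _ xX yX)/orP => ?; [move/negP: xP | move/negP: yP].
have card_P : #|mX :&: P| + #|uX :&: P| <= #|P|.
  rewrite -(cardsID matched P) leq_add //; apply/subset_leq_card/subsetP => x;
  by rewrite !inE => /andP[/andP[_ ->] ->].
have := cardsID P mX; have := cardsID P uX; rewrite /twin_bound -/mX -/uX; lia.
Qed.

Lemma twin_bound_witness : exists P, hits_twins X P /\ 2 * #|P| <= twin_bound X.
Proof.
pose L : {set 'I_n} := [set x : 'I_n | x < mate x].
have [U U1 uXU] : exists2 U : {set 'I_n}, #|U| <= 1 & #|uX :\: U| <= #|uX| - 1.
  have [->|[u uuX]] := set_0Vmem uX; first by exists set0; rewrite ?set0D ?cards0.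
  by exists [set u]; rewrite ?cards1 // (cardsD1 u uX) uuX add1n subn1.
exists ((mX :&: L) :|: (uX :\: U)); split.
- move=> x y xX yX /andP[xy /orP[/eqP yE | /andP[/eqP mx /eqP my]]].
    subst y; have xmX : x \in mX by rewrite !inE xX eq_sym.
    rewrite !in_setU !in_setI xmX mate_matchedD //= !inE mateK.
    case: ltngtP => [_|_|/ord_inj exm]; rewrite ?orbT //.
    by rewrite -exm eqxx in xy.
  have : (x \notin U) || (y \notin U).
    apply: contraLR U1; rewrite negb_or !negbK -ltnNge => /andP[xU yU].
    apply: leq_trans (subset_leq_card (_ : [set x; y] \subset U)).
      by rewrite cards2 xy.
    by rewrite subUset !sub1set xU yU.
  by case/orP => nU; rewrite !inE nU ?xX ?yX ?mx ?my ?eqxx ?orbT.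
- have mL : #|mX :&: L| <= #|mX :\: L|.
    rewrite -(card_imset _ mate_inj); apply/subset_leq_card/subsetP => _ /imsetP[x + ->].
    rewrite inE => /andP[xmX xL]; rewrite inE mate_matchedD // andbT !inE mateK -leqNgt.
    by move: xL; rewrite inE => /ltnW.
  have := (leq_card_setU (mX :&: L) (uX :\: U)).1; have := cardsID L mX.
  rewrite /twin_bound -/mX -/uX; lia.
Qed.

End TwinBound.

End MatchingComplement.

Lemma card_sum_set (T1 T2 : finType) (S : {set T1 + T2}) :
  #|S| = #|inl @^-1: S| + #|inr @^-1: S|.
Proof.
by rewrite -!sum1_card big_sumType; congr (_ + _); apply: eq_bigl => x; rewrite inE.
Qed.

Lemma perm_sum_split (T1 T2 : finType) (p : {perm T1 + T2}) :
  (forall z, exists c, p (inl z) = inl c) ->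
  exists (pA : {perm T1}) (pB : {perm T2}),
    (forall z, p (inl z) = inl (pA z)) /\ (forall z, p (inr z) = inr (pB z)).
Proof.
move=> pinl; pose fA z := if p (inl z) is inl c then c else z.
have pA_def z : p (inl z) = inl (fA z) by rewrite /fA; case: (pinl z) => c ->.
have fA_inj : injective fA.
  by move=> x y eq_fA; apply: inl_inj; apply: (@perm_inj _ p); rewrite !pA_def eq_fA.
have pinr z : exists c, p (inr z) = inr c.
  case E: (p (inr z)) => [c|c]; last by exists c.
  have [c' fAc] : exists c', fA c' = c.
    by exists ((perm fA_inj)^-1 c)%g; rewrite -{2}(permKV (perm fA_inj) c) permE.
  by move: E; rewrite -fAc -pA_def => /perm_inj.
pose fB z := if p (inr z) is inr c then c else z.
have pB_def z : p (inr z) = inr (fB z) by rewrite /fB; case: (pinr z) => c ->.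
have fB_inj : injective fB.
  by move=> x y eq_fB; apply: inr_inj; apply: (@perm_inj _ p); rewrite !pB_def eq_fB.
by exists (perm fA_inj), (perm fB_inj); split=> z; rewrite permE.
Qed.

Section FunctigraphBasics.
Variables (T : finType) (G : rel T) (g : T -> T).

Lemma functigraph_sym : symmetric G -> symmetric (functigraph G g).
Proof. by move=> Gsym [x|x] [y|y] //=; rewrite Gsym. Qed.

Lemma functigraph_irr : irreflexive G -> irreflexive (functigraph G g).
Proof. by move=> Girr [x|x] /=; rewrite Girr. Qed.

End FunctigraphBasics.

Section ConstantFunctigraph.
Variables (n : nat) (M : {set {set 'I_n}}) (w : 'I_n).
Hypothesis M_triv : trivIset M.
Local Notation G := (Kn_minus M).
Local Notation F := (functigraph G (fun _ => w)).

Let F_sym : symmetric F := functigraph_sym _ (@Kn_minus_sym n M).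
Let F_irr : irreflexive F := functigraph_irr _ (@Kn_minus_irr n M).

Lemma twins_inl x y : twin_pair M x y -> twins F (inl x) (inl y).
Proof. by move=> xy [z|z] zx zy //=; apply: twins_Kn_minus. Qed.

Lemma twins_inr x y : x != w -> y != w -> twin_pair M x y -> twins F (inr x) (inr y).
Proof.
move=> xw yw xy [z|z] zx zy /=; first by rewrite eq_sym (negbTE xw) eq_sym (negbTE yw).
exact: twins_Kn_minus.
Qed.

Lemma fixing_set_hits_inl S : fixing_set F S -> hits_twins M set0 (inl @^-1: S).
Proof.
move=> fixS x y _ _ xy; rewrite !inE.
apply: (fixing_set_twins F_sym F_irr fixS (twins_inl xy)).
by case/andP: xy.
Qed.

Lemma fixing_set_hits_inr S :
  fixing_set F S -> hits_twins M [set w; mate M w] (inr @^-1: S).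
Proof.
move=> fixS x y; rewrite !inE !negb_or => /andP[xw _] /andP[yw _] xy.
apply: (fixing_set_twins F_sym F_irr fixS (twins_inr xw yw xy)).
by case/andP: xy.
Qed.

Hypothesis n_gt2 : 2 < n.

Lemma exists_third (a b : 'I_n) : exists c, (c != a) && (c != b).
Proof.
have : 0 < #|~: [set a; b]|.
  by have := cardsC [set a; b]; rewrite card_ord cards2; case: (a != b) => /=; lia.
by case/card_gt0P => c; rewrite !inE negb_or; exists c.
Qed.

Lemma aut_keeps_inl (p : {perm 'I_n + 'I_n}) a :
  is_automorphism F p -> p (inr w) = inr w -> p (inl a) = inl a ->
  forall z, exists c, p (inl z) = inl c.
Proof.
move=> /is_automorphismP autp pw pa.
have step y z : (exists c, p (inl y) = inl c) -> G z y -> exists c, p (inl z) = inl c.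
  case=> c pyc zy; case pz: (p (inl z)) => [d|d]; first by exists d.
  have := autp (inl z) (inl y); rewrite pz pyc /= zy => /eqP wd.
  by move: pz; rewrite -wd -pw => /perm_inj.
have pa' : exists c, p (inl a) = inl c by exists a.
move=> z; have [->|za] := eqVneq z a; first exact: pa'.
have [za'|] := boolP (G z a); first exact: step pa' za'.
rewrite Kn_minusE // eq_sym za /= negbK => /eqP maz.
have mza : mate M a = z by rewrite maz mateK.
have [y /andP[yz ya]] := exists_third z a.
apply: (step y); last by rewrite Kn_minusE // yz -maz.
by apply: (step a) pa' _; rewrite Kn_minus_sym Kn_minusE // ya mza.
Qed.

Lemma card_nbr_inr_w : n < #|[set v | F (inr w) v]|.
Proof.
have [y /andP[yw ym]] := exists_third w (mate M w).
have sub : inr y |: inl @: [set: 'I_n] \subset [set v | F (inr w) v].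
  apply/subsetP => v; rewrite in_setU1 => /predU1P[->|/imsetP[c _ ->]]; rewrite inE //=.
  by rewrite Kn_minusE // yw ym.
apply: leq_trans (subset_leq_card sub); rewrite cardsU1 card_imset ?cardsT ?card_ord //=.
  by have /negbTE-> : inr y \notin inl @: [set: 'I_n] by apply/imsetP => -[].
exact: inl_inj.
Qed.

Lemma card_nbr_le v : v != inr w -> #|[set u | F v u]| <= n.
Proof.
case: v => z zw.
  have sub : [set u | F (inl z) u] \subset inr w |: inl @: [set~ z].
    apply/subsetP => -[c|c]; rewrite !inE /=.
      move=> zc; rewrite (mem_imset _ _ inl_inj) !inE.
      by apply: contraTneq zc => ->; rewrite Kn_minus_irr.
    by move/eqP->; rewrite eqxx.
  apply: leq_trans (subset_leq_card sub) _.
  rewrite cardsU1 card_imset ?cardsC1 ?card_ord; last exact: inl_inj.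
  by case: (inr w \notin _); lia.
have sub : [set u | F (inr z) u] \subset inr @: [set~ z].
  apply/subsetP => -[c|c]; rewrite !inE /=; first by move/eqP=> wz; rewrite wz eqxx in zw.
  move=> zc; rewrite (mem_imset _ _ inr_inj) !inE.
  by apply: contraTneq zc => ->; rewrite Kn_minus_irr.
apply: leq_trans (subset_leq_card sub) _.
by rewrite card_imset ?cardsC1 ?card_ord ?leq_pred //; exact: inr_inj.
Qed.

Lemma aut_fixes_inr_w (p : {perm 'I_n + 'I_n}) :
  is_automorphism F p -> p (inr w) = inr w.
Proof.
move=> autp; apply/eqP/negPn/negP => /card_nbr_le.
by rewrite card_nbr_aut // leqNgt card_nbr_inr_w.
Qed.

Lemma fixing_set_functigraph (PA PB : {set 'I_n}) :
  PA != set0 -> hits_twins M set0 PA -> hits_twins M [set w; mate M w] PB ->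
  fixing_set F (inl @: PA :|: inr @: PB).
Proof.
move=> /set0Pn[a aPA] hitA hitB; apply/forallP => p.
apply/implyP => /andP[autp /forall_inP fixp].
have fixS v : v \in inl @: PA :|: inr @: PB -> p v = v by move/fixp/eqP.
have pw := aut_fixes_inr_w autp.
have pa : p (inl a) = inl a by apply: fixS; rewrite in_setU imset_f.
have [pA [pB [pAE pBE]]] := perm_sum_split (aut_keeps_inl autp pw pa).
have /is_automorphismP autF := autp.
have autA : is_automorphism G pA.
  by apply/is_automorphismP => x y; have := autF (inl x) (inl y); rewrite !pAE.
have autB : is_automorphism G pB.
  by apply/is_automorphismP => x y; have := autF (inr x) (inr y); rewrite !pBE.
have pA1 : pA = 1%g.
  apply: (aut_Kn_minus_id M_triv autA _ hitA) => x xPA.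
  by have := fixS (inl x); rewrite pAE in_setU imset_f // => /(_ isT) [].
have pBw : pB w = w by move: pw; rewrite pBE => -[].
have pB1 : pB = 1%g.
  apply: (aut_Kn_minus_id M_triv autB _ (hits_twinsU hitB)) => x.
  rewrite in_setU => /orP[xPB|].
    by have := fixS (inr x); rewrite pBE in_setU imset_f ?orbT // => /(_ isT) [].
  by rewrite !inE => /orP[]/eqP->; rewrite ?aut_mate // pBw.
by apply/eqP/permP => -[x|x]; rewrite perm1 ?pAE ?pBE ?pA1 ?pB1 perm1.
Qed.

Lemma fixnum_functigraph :
  2 * fixnum F = twin_bound M set0 + twin_bound M [set w; mate M w].
Proof.
have closed0 : {in set0, forall x, mate M x \in set0} by move=> x; rewrite inE.
have closedw : {in [set w; mate M w], forall x, mate M x \in [set w; mate M w]}.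
  by move=> x; rewrite !inE => /orP[]/eqP->; rewrite ?mateK // eqxx ?orbT.
have [PA [hitA PAle]] := twin_bound_witness M_triv closed0.
have [PB [hitB PBle]] := twin_bound_witness M_triv closedw.
have PA0 : PA != set0.
  rewrite -card_gt0 -(ltn_pmul2l (isT : 0 < 2)) muln0.
  exact: leq_trans (twin_bound_set0_gt0 _ (ltnW n_gt2)) (twin_bound_le M_triv closed0 hitA).
have cardS0 : #|inl @: PA :|: inr @: PB| = #|PA| + #|PB|.
  rewrite card_sum_set; congr (_ + _); apply: eq_card => x;
  by rewrite !inE ?(mem_imset _ _ inl_inj) ?(mem_imset _ _ inr_inj);
    case: imsetP => [[]|]; rewrite ?orbF.
have bound S : fixing_set F S ->
    twin_bound M set0 + twin_bound M [set w; mate M w] <= 2 * #|S|.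
  move=> fixS; rewrite card_sum_set mulnDr leq_add //; apply: twin_bound_le => //.
    exact: fixing_set_hits_inl.
  exact: fixing_set_hits_inr.
have fixS0 := fixing_set_functigraph PA0 hitA hitB.
have S0le : 2 * #|inl @: PA :|: inr @: PB| <=
    twin_bound M set0 + twin_bound M [set w; mate M w].
  by rewrite cardS0 mulnDr leq_add.
rewrite (fixnum_eq fixS0) => [|S fixS]; last first.
  by rewrite -(leq_pmul2l (isT : 0 < 2)); apply: leq_trans S0le (bound S fixS).
by apply/eqP; rewrite eqn_leq S0le bound.
Qed.

End ConstantFunctigraph.

Theorem theorem3p6 (n i : nat) (M : {set {set 'I_n}}) (w : 'I_n) :
  3 <= n -> 1 <= i <= n./2 -> is_matching M -> #|M| = i ->
  let G := Kn_minus M in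
  let f := fixnum (functigraph G (fun _ => w)) in
  [/\ (i <= n./2 - 1 -> f = 2 * n - 2 * i - 3),
      (~~ odd n -> i = n./2 -> f = n - 1)
    & (odd n -> i = n./2 ->
         f = if saturated G w then 2 * n./2 else 2 * n./2 - 1)].
Proof.
move=> n_gt2 /andP[i_gt0 i_le] matchM cardM G f.
have M_triv : trivIset M by case/andP: matchM.
have := fixnum_functigraph w M_triv n_gt2; rewrite -/G -/f.
rewrite twin_bound_mate_pair // /twin_bound !setD0.
have card_m : #|matched M| = 2 * i by rewrite card_matched // cardM.
have card_s : #|~: matched M| = n - 2 * i.
  by have := cardsC (matched M); rewrite card_ord card_m; lia.
have unmatched_pos : mate M w == w -> 0 < n - 2 * i.
  by move=> mw; rewrite -card_s; apply/card_gt0P; exists w; rewrite !inE negbK.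
have := odd_double_half n; rewrite -muln2.
rewrite /G saturated_Kn_minus // card_m card_s; clearbody f.
by case: (mate M w == w) unmatched_pos; case: (odd n) => /=; split; lia.
Qed.
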